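(* In the standing setting, for every cardinal $\alpha\ge 1$, $\mathfrak{F}^{\mathfrak{D}}_\pm\times K_\alpha\not\models\mathsf{e}^{\mathfrak{D}}(w_0)$.
   Context: $K_\alpha$ is the complete loopless graph on $\alpha$ vertices. Standing setting: Kripke frames $(W,(R_\lambda)_{\lambda\in\Lambda})$; a diagram is a finite pointed rooted frame $\mathfrak{D}=(\{x_0,\dots,x_n\},(R^{\mathfrak{D}}_\lambda),x_0)$; $\mathsf{e}^{\mathfrak{D}}(x_0)=\exists x_1\dots\exists x_n\bigwedge\{x_iR_\lambda x_j\mid x_iR^{\mathfrak{D}}_\lambda x_j\}$. An inner cycle is an undirected cycle (closed undirected path of positive length without immediate backtracking) not containing $x_0$; $\mathfrak{D}$ is globally minimal if deleting any single edge yields $\mathfrak{D}'$ with $\forall x_0\mathsf{e}^{\mathfrak{D}'}(x_0)\to\forall x_0\mathsf{e}^{\mathfrak{D}}(x_0)$ not first-order valid. Let $\mathfrak{D}$ be globally minimal rooted with an inner cycle, and let $\mathfrak{F}^{\mathfrak{D}}_+=(W_\pm,(R^+_\lambda),w_0)$, $\mathfrak{F}^{\mathfrak{D}}_-=(W_\pm,(R^-_\lambda),w_0)$, $x_d,x_{d'}\in W^{\mathfrak{D}}$, $\lambda_d$, and an injective homomorphism $g:\mathfrak{D}\to\mathfrak{F}^{\mathfrak{D}}_+$ ($g(x_0)=w_0$) satisfy: (C-i) $R^-$ is $R^+$ with the single edge $(g(x_d),g(x_{d'}))\in R^+_{\lambda_d}$ removed; (C-ii) $\mathfrak{F}^{\mathfrak{D}}_-\not\models\mathsf{e}^{\mathfrak{D}}(w_0)$;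 (C-iii) $\mathfrak{F}^{\mathfrak{D}}_+\models\mathsf{e}^{\mathfrak{D}}(w_0)$; (C-iv) $g(x_d),g(x_{d'})$ are joined in $\mathfrak{F}^{\mathfrak{D}}_-$ by an undirected path avoiding $w_0$ within $g(W^{\mathfrak{D}})$; (C-v) every homomorphism $h:\mathfrak{D}\to\mathfrak{F}^{\mathfrak{D}}_+$ has image $g(W^{\mathfrak{D}})$ and $h(x_i)R^+_\lambda h(x_j)\Rightarrow x_iR^{\mathfrak{D}}_\lambda x_j$; (C-vi) $\mathfrak{F}^{\mathfrak{D}}_-\models\mathsf{e}^{\mathfrak{D}}(w)$ for all $w\ne w_0$. For a graph $G=(V,E)$ ($E$ symmetric), the pseudoproduct $\mathfrak{F}^{\mathfrak{D}}_\pm\times G$ has carrier $\{w_0\}\cup(W_\pm\setminus\{w_0\})\times V$; with $pr(w_0)=w_0$, $pr((y,v))=y$, $\pi(w_0)=\bot$, $\pi((y,v))=v$, $\eta R_\lambda\chi$ iff either $pr(\eta)R^-_\lambda pr(\chi)$ and ($\pi(\eta)=\pi(\chi)$ or $\bot\in\{\pi(\eta),\pi(\chi)\}$), or $(pr(\eta),pr(\chi))\in R^+_\lambda\setminus R^-_\lambda$ and $\{\pi(\eta),\pi(\chi)\}\in E$. *)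

From Stdlib Require Import Relation_Operators List.
From mathcomp Require Import all_boot.
Set Implicit Arguments. Unset Strict Implicit. Unset Printing Implicit Defensive.

Section Defs.
Variable Lam : Type.

(* A diagram on vertices x_0..x_n is represented by 'I_n.+1, root x_0 = ord0,
   and relations RD : Lam -> 'I_n.+1 -> 'I_n.+1 -> Prop. *)

(* finitely many edges (so that e^D is a finite conjunction) *)
Definition finite_edges (n : nat) (RD : Lam -> 'I_n.+1 -> 'I_n.+1 -> Prop) : Prop :=
  exists s : seq (Lam * 'I_n.+1 * 'I_n.+1)%type,
    forall l i j, RD l i j -> List.In (l, i, j) s.

Definition rooted (n : nat) (RD : Lam -> 'I_n.+1 -> 'I_n.+1 -> Prop) : Prop :=
  forall i : 'I_n.+1,
    clos_refl_trans _ (fun a b => exists l, RD l a b) ord0 i.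

(* F |= e^D(w): there is an assignment of x_0..x_n with x_0 |-> w
   making all atoms x_i R_l x_j of D true *)
Definition sat (n : nat) (RD : Lam -> 'I_n.+1 -> 'I_n.+1 -> Prop)
  (W : Type) (R : Lam -> W -> W -> Prop) (w : W) : Prop :=
  exists f : 'I_n.+1 -> W, f ord0 = w /\
    forall l i j, RD l i j -> R l (f i) (f j).

Definition del_edge (n : nat) (RD : Lam -> 'I_n.+1 -> 'I_n.+1 -> Prop)
  (l0 : Lam) (i0 j0 : 'I_n.+1) : Lam -> 'I_n.+1 -> 'I_n.+1 -> Prop :=
  fun l i j => RD l i j /\ ~ (l = l0 /\ i = i0 /\ j = j0).

(* first-order validity of  forall x0 e^{D'}(x0) -> forall x0 e^{D}(x0):
   truth in every Kripke frame (structure) *)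
Definition fo_valid_impl (n : nat) (RD' RD : Lam -> 'I_n.+1 -> 'I_n.+1 -> Prop) : Prop :=
  forall (W : Type) (R : Lam -> W -> W -> Prop),
    (forall w, sat RD' R w) -> forall w, sat RD R w.

Definition globally_minimal (n : nat) (RD : Lam -> 'I_n.+1 -> 'I_n.+1 -> Prop) : Prop :=
  forall l i j, RD l i j -> ~ fo_valid_impl (del_edge RD l i j) RD.

(* inner cycle: a closed undirected walk of positive length, without
   immediate backtracking, not passing through x_0.  A step is an edge
   (l, i, j) traversed forward (b = true, from i to j) or backward. *)
Definition sfrom (n : nat) (s : (Lam * 'I_n.+1 * 'I_n.+1 * bool)%type) : 'I_n.+1 :=
  let: (l, i, j, b) := s in if b then i else j.
Definition sto (n : nat) (s : (Lam * 'I_n.+1 * 'I_n.+1 * bool)%type) : 'I_n.+1 :=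
  let: (l, i, j, b) := s in if b then j else i.
Definition backtrack (n : nat) (s t : (Lam * 'I_n.+1 * 'I_n.+1 * bool)%type) : Prop :=
  let: (l, i, j, b) := s in let: (l', i', j', b') := t in
  l = l' /\ i = i' /\ j = j' /\ b <> b'.
Fixpoint nb_walk (n : nat) (s : (Lam * 'I_n.+1 * 'I_n.+1 * bool)%type)
  (rest : seq (Lam * 'I_n.+1 * 'I_n.+1 * bool)%type) : Prop :=
  match rest with
  | [::] => True
  | t :: r => sto s = sfrom t /\ ~ backtrack s t /\ nb_walk t r
  end.
Definition has_inner_cycle (n : nat) (RD : Lam -> 'I_n.+1 -> 'I_n.+1 -> Prop) : Prop :=
  exists (s : (Lam * 'I_n.+1 * 'I_n.+1 * bool)%type) (rest : seq (Lam * 'I_n.+1 * 'I_n.+1 * bool)%type),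
    List.Forall (fun t : (Lam * 'I_n.+1 * 'I_n.+1 * bool)%type =>
                   let: (l, i, j, b) := t in RD l i j /\ sfrom t <> ord0) (s :: rest)
    /\ nb_walk s rest
    /\ sto (last s rest) = sfrom s.

Fixpoint upath (W : Type) (R : Lam -> W -> W -> Prop) (a : W) (p : seq W) : Prop :=
  match p with
  | [::] => True
  | b :: q => (exists l, R l a b \/ R l b a) /\ upath R b q
  end.

(* pseudoproduct F_pm x G, G = (V, E); carrier {w0} U (W \ {w0}) x V,
   w0 represented by None *)
Definition pp_carrier (W : Type) (w0 : W) (V : Type) : Type :=
  option ({y : W | y <> w0} * V)%type.
Definition pp_pr (W : Type) (w0 : W) (V : Type) (eta : pp_carrier w0 V) : W :=
  match eta with None => w0 | Some (y, _) => proj1_sig y end.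
Definition pp_pi (W : Type) (w0 : W) (V : Type) (eta : pp_carrier w0 V) : option V :=
  match eta with None => None | Some (_, v) => Some v end.
Definition pp_rel (W : Type) (w0 : W) (Rp Rm : Lam -> W -> W -> Prop)
  (V : Type) (E : V -> V -> Prop) : Lam -> pp_carrier w0 V -> pp_carrier w0 V -> Prop :=
  fun l eta chi =>
    (Rm l (pp_pr eta) (pp_pr chi) /\
       (pp_pi eta = pp_pi chi \/ pp_pi eta = None \/ pp_pi chi = None))
    \/
    ((Rp l (pp_pr eta) (pp_pr chi) /\ ~ Rm l (pp_pr eta) (pp_pr chi)) /\
       exists u v, pp_pi eta = Some u /\ pp_pi chi = Some v /\ E u v).

Definition K_edge (V : Type) : V -> V -> Prop := fun u v => u <> v.

End Defs.

(* Suppose f realises e^D at the root of F_pm x K_V.  Projecting f gives a homomorphism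
   h : D -> F_+ sending x_0 to w_0, so by (C-v) h is a bijection onto g(W^D) reflecting
   all edges.  Since F_- does not satisfy e^D(w_0), h must send some edge of D onto the
   deleted edge (g x_d, g x_d'); in the product this edge joins two distinct colours.
   But the R^- path of (C-iv) pulls back to D edge by edge, and every R^- edge between
   non-root points joins points of equal colour, so g x_d and g x_d' carry the same
   colour: contradiction. *)
From Stdlib Require Import List Classical ClassicalEpsilon.
From mathcomp Require Import all_boot.
Set Implicit Arguments. Unset Strict Implicit. Unset Printing Implicit Defensive.

Lemma injective_of_image_cover (T : finType) (W : Type) (g h : T -> W) :
  injective g -> (forall j, exists i, h i = g j) -> injective h.
Proof.
move=> g_inj cover.
have [k hk] : exists k : T -> T, forall j, h (k j) = g j.
  exists (fun j => proj1_sig (constructive_indefinite_description _ (cover j))).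
  by move=> j; case: constructive_indefinite_description.
have k_inj : injective k by move=> j j' /(congr1 h); rewrite !hk => /g_inj.
move=> a b; have /codomP[ja ->] := injF_onto k_inj a.
have /codomP[jb ->] := injF_onto k_inj b.
by rewrite !hk => /g_inj ->.
Qed.

Lemma not_sat_bad_edge (Lam : Type) (n : nat) (RD : Lam -> 'I_n.+1 -> 'I_n.+1 -> Prop)
    (W : Type) (R : Lam -> W -> W -> Prop) (w : W) (h : 'I_n.+1 -> W) :
  ~ sat RD R w -> h ord0 = w -> exists l i j, RD l i j /\ ~ R l (h i) (h j).
Proof.
move=> unsat h0; apply: NNPP => no_bad; apply: unsat; exists h; split=> // l i j Dij.
by apply: NNPP => notR; apply: no_bad; exists l, i, j.
Qed.

Section Pseudoproduct.
Variables (Lam W : Type) (w0 : W) (Rp Rm : Lam -> W -> W -> Prop).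
Variables (V : Type) (E : V -> V -> Prop).

Local Notation carrier := (pp_carrier w0 V).
Local Notation R := (pp_rel Rp Rm E).

Lemma pp_pi_None (eta : carrier) : pp_pi eta = None -> pp_pr eta = w0.
Proof. by case: eta => [[]|]. Qed.

Lemma pp_rel_pr l (eta chi : carrier) :
  (forall l u v, Rm l u v -> Rp l u v) -> R l eta chi -> Rp l (pp_pr eta) (pp_pr chi).
Proof. by move=> RmRp [[/RmRp]|[[]]]. Qed.

Lemma pp_rel_Rm_pi l (eta chi : carrier) :
  R l eta chi -> Rm l (pp_pr eta) (pp_pr chi) ->
  pp_pr eta <> w0 -> pp_pr chi <> w0 -> pp_pi eta = pp_pi chi.
Proof. by case=> [[_ [|[/pp_pi_None|/pp_pi_None]]]|[[_ notRm] _]]. Qed.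

Lemma pp_rel_notRm l (eta chi : carrier) :
  R l eta chi -> ~ Rm l (pp_pr eta) (pp_pr chi) ->
  exists u v, pp_pi eta = Some u /\ pp_pi chi = Some v /\ E u v.
Proof. by case=> [[]|[_ uv]]. Qed.

Variables (T : Type) (f : T -> carrier).
Hypothesis f_lift : forall l a b, Rm l (pp_pr (f a)) (pp_pr (f b)) -> R l (f a) (f b).
Hypothesis prf_inj : injective (fun a => pp_pr (f a)).

Lemma pp_pi_const_upath (q : seq W) (w : W) :
  upath Rm w q ->
  List.Forall (fun x => x <> w0 /\ exists a, pp_pr (f a) = x) (w :: q) ->
  forall a b, pp_pr (f a) = w -> pp_pr (f b) = last w q -> pp_pi (f a) = pp_pi (f b).
Proof.
elim: q w => [|x q IHq] w /=.
  by move=> _ _ a b <- fb; rewrite (prf_inj fb).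
move=> [[l wx] path_q] /Forall_cons_iff [[w_ne _] all_q] a b fa fb.
have [x_ne [c fc]] := Forall_inv all_q.
rewrite -(IHq x path_q all_q c b fc fb).
rewrite -fa -fc in wx w_ne x_ne *.
case: wx => [wx|xw].
- exact: pp_rel_Rm_pi (f_lift wx) wx w_ne x_ne.
- by symmetry; apply: pp_rel_Rm_pi (f_lift xw) xw x_ne w_ne.
Qed.

End Pseudoproduct.

Theorem mainTheorem6
  (Lam : Type) (n : nat) (RD : Lam -> 'I_n.+1 -> 'I_n.+1 -> Prop)
  (hfin : finite_edges RD) (hroot : rooted RD)
  (hmin : globally_minimal RD) (hcyc : has_inner_cycle RD)
  (Wpm : Type) (Rp Rm : Lam -> Wpm -> Wpm -> Prop) (w0 : Wpm)
  (xd xd' : 'I_n.+1) (ld : Lam) (g : 'I_n.+1 -> Wpm)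
  (g_inj : forall i j, g i = g j -> i = j)
  (g_root : g ord0 = w0)
  (g_hom : forall l i j, RD l i j -> Rp l (g i) (g j))
  (Ci_edge : Rp ld (g xd) (g xd'))
  (Ci : forall l u v, Rm l u v <-> (Rp l u v /\ ~ (l = ld /\ u = g xd /\ v = g xd')))
  (Cii : ~ sat RD Rm w0)
  (Ciii : sat RD Rp w0)
  (Civ : exists p : seq Wpm,
      upath Rm (g xd) p /\ last (g xd) p = g xd' /\
      List.Forall (fun w => w <> w0 /\ exists i, g i = w) (g xd :: p))
  (Cv : forall h : 'I_n.+1 -> Wpm, h ord0 = w0 ->
      (forall l i j, RD l i j -> Rp l (h i) (h j)) ->
      (forall w, (exists i, h i = w) <-> (exists i, g i = w)) /\
      (forall l i j, Rp l (h i) (h j) -> RD l i j))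
  (Cvi : forall w, w <> w0 -> sat RD Rm w)
  (V : Type) (v0 : V) :
  ~ sat RD (pp_rel Rp Rm (@K_edge V)) (@None ({y : Wpm | y <> w0} * V)%type).
Proof.
move=> [f [f0 f_hom]]; pose h i := pp_pr (f i).
have RmRp l u v : Rm l u v -> Rp l u v by case/Ci.
have h0 : h ord0 = w0 by rewrite /h f0.
have h_hom l i j : RD l i j -> Rp l (h i) (h j).
  by move/f_hom; apply: pp_rel_pr.
have [h_img h_refl] := Cv h h0 h_hom.
have g_in_img w : (exists i, g i = w) -> exists i, h i = w by move/h_img.
have h_inj : injective h.
  by apply: (injective_of_image_cover g_inj) => j; apply: g_in_img; exists j.
have [l [i [j [Dij notRm]]]] := not_sat_bad_edge Cii h0.
have [u [v [fi [fj uv]]]] := pp_rel_notRm (f_hom _ _ _ Dij) notRm.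
have [_ [hi hj]] : l = ld /\ h i = g xd /\ h j = g xd'.
  by apply: NNPP => not_deleted; apply: notRm; apply/Ci; split; [apply: h_hom|].
have f_lift l' a b : Rm l' (h a) (h b) -> pp_rel Rp Rm (@K_edge V) l' (f a) (f b).
  by move/RmRp/h_refl; apply: f_hom.
case: Civ => p [path_p [last_p all_p]].
have all_img : List.Forall (fun w => w <> w0 /\ exists a, h a = w) (g xd :: p).
  by apply: Forall_impl all_p => w [w_ne /g_in_img].
have := pp_pi_const_upath f_lift h_inj path_p all_img hi (etrans hj (esym last_p)).
by rewrite fi fj => -[u_eq_v]; apply: uv.
Qed.
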